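(* Let $N\ge1$, $\alpha_1,\dots,\alpha_N\ge0$, let $b_1,\dots,b_N>0$ be pairwise distinct, set $\alpha=\sum_j\alpha_j$ and $$K(t)=\sum_{j=1}^N\alpha_jK_j(t),\qquad K_j(t)=\sum_{i=1}^jb_i\psi_i^je^{-b_it},\qquad \psi_i^j=\prod_{k=1,k\neq i}^j\frac{b_k}{b_k-b_i}.$$ Let $u$ be the solution of $\dot u(t)=-\alpha u(t)+\int_0^tK(t-s)u(s)\,ds$, $u(0)=u_0$. Then there is an $(N+1)\times(N+1)$ Markov generator $A$ and an initial vector $p(0)$ such that the solution $p$ of $\dot p=A^*p$ satisfies $p_0(t)=u(t)$ for all $t\ge0$; specifically one may take $A^*$ to be the matrix with first row $(-\alpha,b_1,0,\dots,0)$ and, for $j=1,\dots,N$, row $j$ having entry $\alpha_j$ in column $0$, $-b_j$ on the diagonal and $b_{j+1}$ in column $j+1$ (if $j<N$), zeros elsewhere, and $p(0)=(u_0,0,\dots,0)$.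
   Context: A Markov generator on $\mathbb{R}^{N+1}$ is a real matrix with nonnegative off-diagonal entries and zero row sums; $A^*$ denotes its transpose. Components of $p$ are indexed $p=(p_0,p_1,\dots,p_N)$. *)

From Stdlib Require Import Reals Lra Lia Arith List.
Import ListNotations.
Open Scope R_scope.

(* sum_range m n f = f m + ... + f n  (0 if n < m) *)
Definition sum_range (m n : nat) (f : nat -> R) : R :=
  fold_right (fun i acc => f i + acc) 0 (seq m (S n - m)).

Definition prod_range_except (m n i : nat) (f : nat -> R) : R :=
  fold_right (fun k acc => (if Nat.eq_dec k i then 1 else f k) * acc) 1
    (seq m (S n - m)).

Definition psi (b : nat -> R) (i j : nat) : R :=
  prod_range_except 1 j i (fun k => b k / (b k - b i)).

Definition Kj (b : nat -> R) (j : nat) (t : R) : R :=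
  sum_range 1 j (fun i => b i * psi b i j * exp (- b i * t)).

Definition Kfun (N : nat) (alpha b : nat -> R) (t : R) : R :=
  sum_range 1 N (fun j => alpha j * Kj b j t).

Definition alpha_sum (N : nat) (alpha : nat -> R) : R :=
  sum_range 1 N alpha.

Definition deriv_nonneg (f : R -> R) (t l : R) : Prop :=
  forall eps : R, 0 < eps -> exists delta : R, 0 < delta /\
    forall h : R, h <> 0 -> Rabs h < delta -> 0 <= t + h ->
      Rabs ((f (t + h) - f t) / h - l) < eps.

Definition markov_generator (N : nat) (A : nat -> nat -> R) : Prop :=
  (forall i j, (i <= N)%nat -> (j <= N)%nat -> i <> j -> 0 <= A i j) /\
  (forall i, (i <= N)%nat -> sum_range 0 N (fun j => A i j) = 0).

Definition Astar (N : nat) (alpha b : nat -> R) (r c : nat) : R :=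
  if Nat.eqb r 0 then
    (if Nat.eqb c 0 then - alpha_sum N alpha
     else if Nat.eqb c 1 then b 1%nat else 0)
  else if Nat.leb r N then
    (if Nat.eqb c 0 then alpha r
     else if Nat.eqb c r then - b r
     else if andb (Nat.eqb c (S r)) (Nat.ltb r N) then b (S r)
     else 0)
  else 0.

Definition Agen (N : nat) (alpha b : nat -> R) (i j : nat) : R :=
  Astar N alpha b j i.

Definition p_init (u0 : R) (i : nat) : R :=
  if Nat.eqb i 0 then u0 else 0.

Definition is_solution (N : nat) (alpha b : nat -> R) (u0 : R)
  (p : R -> nat -> R) : Prop :=
  (forall i, (i <= N)%nat -> p 0 i = p_init u0 i) /\
  (forall t, 0 <= t -> forall i, (i <= N)%nat ->
     deriv_nonneg (fun s => p s i) t
       (sum_range 0 N (fun c => Astar N alpha b i c * p t c))).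

From Stdlib Require Import Reals Lra Lia List FunctionalExtensionality.
From Coquelicot Require Import Coquelicot.
Open Scope R_scope.

(* Given p_0 = u, the equations of dp/dt = A^* p for the components j >= 1 are linear with
   source alpha_j u, and they are solved explicitly by convolutions:
   b_j p_j(t) = int_0^t sum_(m >= j) alpha_m K_(j,m)(t - s) u(s) ds, where K_(j,m) is K_m with
   the index ranges 1..m replaced by j..m.  These kernels satisfy
   K_(j,m)' = -b_j K_(j,m) + b_j K_(j+1,m) and, for j < m, K_(j,m)(0) = 0; the latter is the
   classical identity sum_i prod_(k <> i) 1/(b_k - b_i) = 0.  Since b_1 p_1 is exactly the memory
   term int_0^t K(t - s) u(s) ds, the first equation is the equation of u, so (u, p_1, ..., p_N)
   is a solution.  Any solution has p_0 = u, because the difference of two solutions solves a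
   linear system with zero initial datum, and an energy estimate on sum_i q_i^2 forces it to
   vanish. *)

(** * Finite sums and products *)

Lemma in_range k m n : In k (seq m (S n - m)) <-> (m <= k <= n)%nat.
Proof. rewrite in_seq. lia. Qed.

Lemma sum_range_ext m n f g :
  (forall k, (m <= k <= n)%nat -> f k = g k) -> sum_range m n f = sum_range m n g.
Proof.
  intros H. unfold sum_range.
  assert (Hl : forall k, In k (seq m (S n - m)) -> f k = g k)
    by (intros k Hk; apply H, in_range, Hk).
  revert Hl. generalize (seq m (S n - m)).
  induction l as [|a l IH]; simpl; intros Hl; [reflexivity|].
  rewrite Hl, IH by auto. reflexivity.
Qed.

Lemma sum_range_le m n f g :
  (forall k, (m <= k <= n)%nat -> f k <= g k) -> sum_range m n f <= sum_range m n g.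
Proof.
  intros H. unfold sum_range.
  assert (Hl : forall k, In k (seq m (S n - m)) -> f k <= g k)
    by (intros k Hk; apply H, in_range, Hk).
  revert Hl. generalize (seq m (S n - m)).
  induction l as [|a l IH]; simpl; intros Hl; [lra|].
  apply Rplus_le_compat; auto.
Qed.

Lemma sum_range_plus m n f g :
  sum_range m n (fun k => f k + g k) = sum_range m n f + sum_range m n g.
Proof.
  unfold sum_range. generalize (seq m (S n - m)).
  induction l as [|a l IH]; simpl; [ring|rewrite IH; ring].
Qed.

Lemma sum_range_scal_l m n c f :
  sum_range m n (fun k => c * f k) = c * sum_range m n f.
Proof.
  unfold sum_range. generalize (seq m (S n - m)).
  induction l as [|a l IH]; simpl; [ring|rewrite IH; ring].
Qed.

Lemma sum_range_scal_r m n c f :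
  sum_range m n (fun k => f k * c) = sum_range m n f * c.
Proof.
  rewrite Rmult_comm, <- sum_range_scal_l. apply sum_range_ext. intros; ring.
Qed.

Lemma sum_range_minus m n f g :
  sum_range m n (fun k => f k - g k) = sum_range m n f - sum_range m n g.
Proof.
  unfold sum_range. generalize (seq m (S n - m)).
  induction l as [|a l IH]; simpl; [ring|rewrite IH; ring].
Qed.

Lemma sum_range_zero m n : sum_range m n (fun _ => 0) = 0.
Proof. rewrite <- (Rmult_0_l 0), sum_range_scal_l. ring. Qed.

Lemma sum_range_empty m n f : (n < m)%nat -> sum_range m n f = 0.
Proof. intros H. unfold sum_range. replace (S n - m)%nat with 0%nat by lia. reflexivity. Qed.

Lemma sum_range_first m n f : (m <= n)%nat -> sum_range m n f = f m + sum_range (S m) n f.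
Proof. intros H. unfold sum_range. replace (S n - m)%nat with (S (S n - S m)) by lia. reflexivity. Qed.

Lemma sum_range_single m f : sum_range m m f = f m.
Proof. rewrite sum_range_first, sum_range_empty by lia. ring. Qed.

Lemma sum_range_last m n f :
  (m <= S n)%nat -> sum_range m (S n) f = sum_range m n f + f (S n).
Proof.
  intros H. unfold sum_range. replace (S (S n) - m)%nat with (S (S n - m)) by lia.
  rewrite seq_S, fold_right_app. replace (m + (S n - m))%nat with (S n) by lia.
  cbn [fold_right]. generalize (seq m (S n - m)). intros l.
  induction l as [|a l IH]; cbn [fold_right]; [ring|rewrite IH; ring].
Qed.

Lemma sum_range_indicator m n k (g : nat -> R) : (m <= k <= n)%nat ->
  sum_range m n (fun c => if Nat.eqb c k then g c else 0) = g k.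
Proof.
  intros Hk. unfold sum_range.
  assert (Hseq : forall a len, fold_right (fun c acc => (if Nat.eqb c k then g c else 0) + acc) 0
      (seq a len) = if (Nat.leb a k && Nat.ltb k (a + len))%bool then g k else 0).
  { intros a len. revert a. induction len as [|len IH]; intros a; simpl.
    - destruct (Nat.leb a k) eqn:E1, (Nat.ltb k (a + 0)) eqn:E2; simpl; auto.
      apply Nat.leb_le in E1; apply Nat.ltb_lt in E2; lia.
    - rewrite IH. destruct (Nat.eqb a k) eqn:E0.
      + apply Nat.eqb_eq in E0. subst a.
        replace (Nat.leb (S k) k) with false by (symmetry; apply Nat.leb_nle; lia).
        replace (Nat.leb k k && Nat.ltb k (k + S len))%bool with true
          by (symmetry; apply andb_true_intro; split; [apply Nat.leb_le|apply Nat.ltb_lt]; lia).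
        simpl. ring.
      + apply Nat.eqb_neq in E0. rewrite Rplus_0_l.
        replace (S a + len)%nat with (a + S len)%nat by lia.
        destruct (Nat.leb a k) eqn:E1, (Nat.leb (S a) k) eqn:E2; simpl; auto;
          rewrite ?Nat.leb_le, ?Nat.leb_nle in *; lia. }
  rewrite Hseq. replace (Nat.leb m k && Nat.ltb k (m + (S n - m)))%bool with true; [reflexivity|].
  symmetry. apply andb_true_intro. split; [apply Nat.leb_le|apply Nat.ltb_lt]; lia.
Qed.

Lemma sum_range_nonneg_term_le m n f i :
  (forall k, (m <= k <= n)%nat -> 0 <= f k) -> (m <= i <= n)%nat -> f i <= sum_range m n f.
Proof.
  intros Hf Hi. rewrite <- (sum_range_indicator m n i f Hi).
  apply sum_range_le. intros k Hk. destruct (Nat.eqb k i); [lra|auto].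
Qed.

Lemma prod_range_except_empty m n i f : (n < m)%nat -> prod_range_except m n i f = 1.
Proof. intros H. unfold prod_range_except. replace (S n - m)%nat with 0%nat by lia. reflexivity. Qed.

Lemma prod_range_except_first m n i f : (m <= n)%nat ->
  prod_range_except m n i f = (if Nat.eq_dec m i then 1 else f m) * prod_range_except (S m) n i f.
Proof. intros H. unfold prod_range_except. replace (S n - m)%nat with (S (S n - S m)) by lia. reflexivity. Qed.

Lemma prod_range_except_last m n i f : (m <= S n)%nat ->
  prod_range_except m (S n) i f = prod_range_except m n i f * (if Nat.eq_dec (S n) i then 1 else f (S n)).
Proof.
  intros H. unfold prod_range_except. replace (S (S n) - m)%nat with (S (S n - m)) by lia.
  rewrite seq_S, fold_right_app. replace (m + (S n - m))%nat with (S n) by lia.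
  cbn [fold_right]. generalize (seq m (S n - m)). intros l.
  induction l as [|a l IH]; cbn [fold_right]; [ring|rewrite IH; ring].
Qed.

Lemma prod_range_except_self m f : prod_range_except m m m f = 1.
Proof.
  rewrite prod_range_except_first, prod_range_except_empty by lia.
  destruct (Nat.eq_dec m m); [ring|congruence].
Qed.

Lemma prod_range_except_mult m n i f g :
  prod_range_except m n i (fun k => f k * g k) = prod_range_except m n i f * prod_range_except m n i g.
Proof.
  unfold prod_range_except. generalize (seq m (S n - m)). intros l.
  induction l as [|a l IH]; simpl; [ring|]. rewrite IH. destruct (Nat.eq_dec a i); ring.
Qed.

(* Index [0] lies outside every range starting at [j > 0], so excluding it excludes nothing. *)
Lemma prod_range_except_pull j m i f : (0 < j)%nat -> (j <= i <= m)%nat ->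
  f i * prod_range_except j m i f = prod_range_except j m 0 f.
Proof.
  intros Hj Hi. unfold prod_range_except.
  assert (Hin : In i (seq j (S m - j))) by (apply in_seq; lia).
  assert (Hout : ~ In 0%nat (seq j (S m - j))) by (rewrite in_seq; lia).
  assert (Hnd : NoDup (seq j (S m - j))) by apply seq_NoDup.
  revert Hin Hout Hnd. generalize (seq j (S m - j)). intros l.
  induction l as [|a l IH]; simpl; intros Hin Hout Hnd; [contradiction|].
  inversion_clear Hnd as [|? ? Ha Hnd'].
  destruct (Nat.eq_dec a 0) as [->|_]; [tauto|].
  destruct (Nat.eq_dec a i) as [<-|Hai].
  - rewrite Rmult_1_l. f_equal.
    assert (Hl0 : ~ In 0%nat l) by tauto. clear IH Hin Hout Hnd'.
    induction l as [|c l IHl]; simpl in *; [reflexivity|].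
    destruct (Nat.eq_dec c a); [tauto|]. destruct (Nat.eq_dec c 0); [tauto|].
    rewrite IHl; tauto.
  - destruct Hin as [|Hin]; [congruence|]. rewrite <- IH by tauto. ring.
Qed.

(** * A Lagrange interpolation identity *)

Section LagrangeIdentity.

Variable N : nat.
Variable b : nat -> R.
Hypothesis b_inj : forall i j, (1 <= i <= N)%nat -> (1 <= j <= N)%nat -> i <> j -> b i <> b j.

Let b_sub_neq0 i j : (1 <= i <= N)%nat -> (1 <= j <= N)%nat -> i <> j -> b i - b j <> 0.
Proof. intros Hi Hj Hij. apply Rminus_eq_contra, b_inj; auto. Qed.

Definition lagrange_weight j m i := prod_range_except j m i (fun k => / (b k - b i)).

Lemma lagrange_weight_first j m i : (1 <= j <= m)%nat -> (1 <= i <= N)%nat -> (m <= N)%nat ->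
  j <> i -> (b j - b i) * lagrange_weight j m i = lagrange_weight (S j) m i.
Proof.
  intros Hjm Hi HmN Hji. unfold lagrange_weight.
  rewrite prod_range_except_first by lia. destruct (Nat.eq_dec j i); [lia|].
  field. apply b_sub_neq0; lia.
Qed.

Lemma lagrange_weight_last j m i : (1 <= j <= S m)%nat -> (1 <= i <= N)%nat -> (S m <= N)%nat ->
  S m <> i -> (b (S m) - b i) * lagrange_weight j (S m) i = lagrange_weight j m i.
Proof.
  intros Hjm Hi HmN Hmi. unfold lagrange_weight.
  rewrite prod_range_except_last by lia. destruct (Nat.eq_dec (S m) i); [lia|].
  field. apply b_sub_neq0; lia.
Qed.

Lemma lagrange_sum_step j m : (1 <= j <= m)%nat -> (S m <= N)%nat ->
  sum_range (S j) (S m) (lagrange_weight (S j) (S m)) - sum_range j m (lagrange_weight j m) =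
  (b j - b (S m)) * sum_range j (S m) (lagrange_weight j (S m)).
Proof.
  intros Hjm HmN.
  rewrite (sum_range_first j (S m)), (sum_range_last (S j) m), (sum_range_last (S j) m),
    (sum_range_first j m) by lia.
  assert (Hmid : sum_range (S j) m (lagrange_weight (S j) (S m))
                 - sum_range (S j) m (lagrange_weight j m) =
                 (b j - b (S m)) * sum_range (S j) m (lagrange_weight j (S m))).
  { rewrite <- sum_range_minus, <- sum_range_scal_l. apply sum_range_ext. intros i Hi.
    rewrite <- (lagrange_weight_first j (S m) i), <- (lagrange_weight_last j m i) by lia. ring. }
  rewrite <- (lagrange_weight_first j (S m) (S m)), <- (lagrange_weight_last j m j) by lia.
  lra.
Qed.

(* For at least two nodes, [sum_i prod_(k <> i) 1 / (b_k - b_i)] is, up to sign, the leading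
   coefficient of the Lagrange interpolant of the constant [1], hence vanishes. *)
Lemma lagrange_sum_eq0 j m : (1 <= j < m)%nat -> (m <= N)%nat ->
  sum_range j m (lagrange_weight j m) = 0.
Proof.
  assert (Hd : forall d k, (1 <= k)%nat -> (k + d <= N)%nat ->
    sum_range k (k + d) (lagrange_weight k (k + d)) = if Nat.eqb d 0 then 1 else 0).
  { induction d as [|d IH]; intros k Hk HdN; simpl.
    - rewrite Nat.add_0_r, sum_range_single. apply prod_range_except_self.
    - replace (k + S d)%nat with (S (k + d)) by lia.
      pose proof (lagrange_sum_step k (k + d) ltac:(lia) ltac:(lia)) as Hstep.
      pose proof (IH (S k) ltac:(lia) ltac:(lia)) as IHS. cbn [Nat.add] in IHS.
      rewrite IHS, IH in Hstep by lia.
      apply (Rmult_eq_reg_l (b k - b (S (k + d)))); [|apply b_sub_neq0; lia]. lra. }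
  intros Hjm HmN. replace m with (j + (m - j))%nat by lia.
  rewrite Hd by lia. destruct (m - j)%nat eqn:E; [lia|reflexivity].
Qed.

Definition psi_from j m i := prod_range_except j m i (fun k => b k / (b k - b i)).

Lemma psi_from_self j : psi_from j j j = 1.
Proof. apply prod_range_except_self. Qed.

Lemma psi_from_first j m i : (1 <= j)%nat -> (j < i <= m)%nat -> (m <= N)%nat ->
  (b j - b i) * psi_from j m i = b j * psi_from (S j) m i.
Proof.
  intros Hj Hi HmN. unfold psi_from. rewrite prod_range_except_first by lia.
  destruct (Nat.eq_dec j i); [lia|]. field. apply b_sub_neq0; lia.
Qed.

Lemma sum_b_psi_from_eq0 j m : (1 <= j < m)%nat -> (m <= N)%nat ->
  sum_range j m (fun i => b i * psi_from j m i) = 0.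
Proof.
  intros Hjm HmN.
  rewrite (sum_range_ext _ _ _ (fun i => prod_range_except j m 0 b * lagrange_weight j m i)).
  - rewrite sum_range_scal_l, lagrange_sum_eq0 by lia. ring.
  - intros i Hi. unfold psi_from, lagrange_weight, Rdiv.
    rewrite prod_range_except_mult, <- (prod_range_except_pull j m i b) by lia. ring.
Qed.

End LagrangeIdentity.

(** * One-sided derivatives on [0, +oo) *)

(* Continuing [f] to the left of [0] linearly with slope [l] turns one-sided derivatives at
   [0] into two-sided ones, so that the [Reals] calculus rules apply. *)
Definition extend_left (f : R -> R) (l x : R) : R :=
  if Rle_dec 0 x then f x else f 0 + l * x.

Lemma extend_left_eq f l x : 0 <= x -> extend_left f l x = f x.
Proof. intros H. unfold extend_left. destruct (Rle_dec 0 x); [reflexivity|lra]. Qed.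

Lemma derivable_pt_lim_extend_left f t l l0 : 0 <= t -> deriv_nonneg f t l ->
  (t = 0 -> l0 = l) -> derivable_pt_lim (extend_left f l0) t l.
Proof.
  intros Ht Hd Hl eps Heps. destruct (Hd eps Heps) as [delta [Hdelta H]].
  destruct (Rle_lt_or_eq_dec 0 t Ht) as [Htpos|<-].
  - assert (Hpos : 0 < Rmin delta t) by (apply Rmin_pos; lra).
    exists (mkposreal _ Hpos). intros h Hh Hha. simpl in Hha.
    assert (Rabs h < delta) by (eapply Rlt_le_trans; [apply Hha|apply Rmin_l]).
    assert (Rabs h < t) by (eapply Rlt_le_trans; [apply Hha|apply Rmin_r]).
    assert (0 <= t + h) by (apply Rabs_def2 in H1; lra).
    rewrite !extend_left_eq by lra. apply H; auto.
  - rewrite (Hl eq_refl). exists (mkposreal _ Hdelta). intros h Hh Hha. simpl in Hha.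
    destruct (Rle_dec 0 (0 + h)).
    + rewrite !extend_left_eq by lra. apply H; auto.
    + unfold extend_left. destruct (Rle_dec 0 (0 + h)); [lra|]. destruct (Rle_dec 0 0); [|lra].
      replace ((f 0 + l * (0 + h) - f 0) / h - l) with 0 by (field; auto).
      rewrite Rabs_R0; lra.
Qed.

Lemma deriv_nonneg_of_derivable_pt_lim F f t l : 0 <= t -> derivable_pt_lim F t l ->
  (forall x, 0 <= x -> F x = f x) -> deriv_nonneg f t l.
Proof.
  intros Ht Hd HFf eps Heps. destruct (Hd eps Heps) as [delta H].
  exists delta. split; [apply cond_pos|]. intros h Hh Hha Hth.
  rewrite <- !HFf by lra. apply H; auto.
Qed.

Lemma deriv_nonneg_plus f g t l1 l2 : 0 <= t -> deriv_nonneg f t l1 -> deriv_nonneg g t l2 ->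
  deriv_nonneg (fun s => f s + g s) t (l1 + l2).
Proof.
  intros Ht H1 H2. apply (deriv_nonneg_of_derivable_pt_lim (plus_fct (extend_left f l1) (extend_left g l2))); auto.
  - apply derivable_pt_lim_plus; apply derivable_pt_lim_extend_left; auto.
  - intros x Hx. unfold plus_fct. rewrite !extend_left_eq; auto.
Qed.

Lemma deriv_nonneg_mult f g t l1 l2 : 0 <= t -> deriv_nonneg f t l1 -> deriv_nonneg g t l2 ->
  deriv_nonneg (fun s => f s * g s) t (l1 * g t + f t * l2).
Proof.
  intros Ht H1 H2. rewrite <- (extend_left_eq f l1 t Ht), <- (extend_left_eq g l2 t Ht).
  apply (deriv_nonneg_of_derivable_pt_lim (mult_fct (extend_left f l1) (extend_left g l2))); auto.
  - apply derivable_pt_lim_mult; apply derivable_pt_lim_extend_left; auto.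
  - intros x Hx. unfold mult_fct. rewrite !extend_left_eq; auto.
Qed.

Lemma deriv_nonneg_const c t : 0 <= t -> deriv_nonneg (fun _ => c) t 0.
Proof.
  intros Ht. apply (deriv_nonneg_of_derivable_pt_lim (fct_cte c)); auto.
  apply derivable_pt_lim_const.
Qed.

Lemma deriv_nonneg_scal c f t l : 0 <= t -> deriv_nonneg f t l ->
  deriv_nonneg (fun s => c * f s) t (c * l).
Proof.
  intros Ht H. replace (c * l) with (0 * f t + c * l) by ring.
  apply (deriv_nonneg_mult (fun _ => c) f); auto. apply deriv_nonneg_const; auto.
Qed.

Lemma deriv_nonneg_minus f g t l1 l2 : 0 <= t -> deriv_nonneg f t l1 -> deriv_nonneg g t l2 ->
  deriv_nonneg (fun s => f s - g s) t (l1 - l2).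
Proof.
  intros Ht H1 H2. apply (deriv_nonneg_of_derivable_pt_lim (minus_fct (extend_left f l1) (extend_left g l2))); auto.
  - apply derivable_pt_lim_minus; apply derivable_pt_lim_extend_left; auto.
  - intros x Hx. unfold minus_fct. rewrite !extend_left_eq; auto.
Qed.

Lemma deriv_nonneg_eq f t l l' : deriv_nonneg f t l -> l = l' -> deriv_nonneg f t l'.
Proof. intros H <-. exact H. Qed.

Lemma deriv_nonneg_ext f g t l : (forall s, f s = g s) -> deriv_nonneg f t l -> deriv_nonneg g t l.
Proof. intros Hfg H. replace g with f by (apply functional_extensionality; auto). exact H. Qed.

Lemma deriv_nonneg_sum m n (f : nat -> R -> R) (d : nat -> R) t : 0 <= t ->
  (forall k, (m <= k <= n)%nat -> deriv_nonneg (f k) t (d k)) ->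
  deriv_nonneg (fun s => sum_range m n (fun k => f k s)) t (sum_range m n d).
Proof.
  intros Ht H. unfold sum_range.
  assert (Hl : forall k, In k (seq m (S n - m)) -> deriv_nonneg (f k) t (d k))
    by (intros k Hk; apply H, in_range, Hk).
  revert Hl. generalize (seq m (S n - m)).
  induction l as [|a l IH]; simpl; intros Hl.
  - apply deriv_nonneg_const; auto.
  - apply (deriv_nonneg_plus (f a)); auto.
Qed.

Lemma deriv_nonneg_exp c t : 0 <= t -> deriv_nonneg (fun s => exp (c * s)) t (c * exp (c * t)).
Proof.
  intros Ht. apply (deriv_nonneg_of_derivable_pt_lim (fun s => exp (c * s))); auto.
  apply is_derive_Reals. auto_derive; auto. ring.
Qed.

Lemma deriv_nonneg_nonpos_le (G dG : R -> R) :
  (forall t, 0 <= t -> deriv_nonneg G t (dG t)) -> (forall t, 0 <= t -> dG t <= 0) ->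
  forall t, 0 <= t -> G t <= G 0.
Proof.
  intros HG Hneg t Ht.
  destruct (Rle_lt_or_eq_dec 0 t Ht) as [Htpos|<-]; [|lra].
  destruct (MVT_gen (extend_left G (dG 0)) 0 t dG) as [c [Hc Hmvt]].
  - intros x Hx. rewrite Rmin_left, Rmax_right in Hx by lra.
    apply is_derive_Reals, derivable_pt_lim_extend_left; [lra|apply HG; lra|now intros ->].
  - intros x Hx. rewrite Rmin_left, Rmax_right in Hx by lra.
    apply derivable_continuous_pt. exists (dG x).
    apply derivable_pt_lim_extend_left; [lra|apply HG; lra|now intros ->].
  - rewrite Rmin_left, Rmax_right in Hc by lra.
    rewrite !extend_left_eq in Hmvt by lra. specialize (Hneg c ltac:(lra)). nra.
Qed.

(** * Uniqueness for linear systems *)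

(* Energy estimate: [E = sum_i q_i^2] satisfies [E' <= 2 M E], so [E(t) e^(-2 M t)] is
   nonincreasing and starts at [0]. *)
Lemma linear_ode_zero_solution (N : nat) (A : nat -> nat -> R) (q : R -> nat -> R) :
  (forall i, (i <= N)%nat -> q 0 i = 0) ->
  (forall t, 0 <= t -> forall i, (i <= N)%nat ->
     deriv_nonneg (fun s => q s i) t (sum_range 0 N (fun c => A i c * q t c))) ->
  forall t, 0 <= t -> forall i, (i <= N)%nat -> q t i = 0.
Proof.
  intros Hq0 Hq.
  set (M := sum_range 0 N (fun i => sum_range 0 N (fun c => Rabs (A i c)))).
  set (E := fun s => sum_range 0 N (fun i => q s i * q s i)).
  set (dq := fun t i => sum_range 0 N (fun c => A i c * q t c)).
  set (dE := fun t => sum_range 0 N (fun i => dq t i * q t i + q t i * dq t i)).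
  assert (HE : forall t, 0 <= t -> deriv_nonneg E t (dE t)).
  { intros t Ht. apply (deriv_nonneg_sum 0 N (fun i s => q s i * q s i)); auto.
    intros k Hk. apply (deriv_nonneg_mult (fun s => q s k) (fun s => q s k)); auto; apply Hq; auto; lia. }
  assert (Hterm : forall t i, (i <= N)%nat -> q t i * q t i <= E t).
  { intros t i Hi. apply (sum_range_nonneg_term_le 0 N (fun i => q t i * q t i)); [|lia].
    intros; nra. }
  assert (Hbound : forall t, dE t <= 2 * M * E t).
  { intros t. unfold dE, M. rewrite Rmult_assoc, <- sum_range_scal_r, <- sum_range_scal_l.
    apply sum_range_le. intros i Hi.
    replace (dq t i * q t i + q t i * dq t i) with (2 * (q t i * dq t i)) by ring.
    apply Rmult_le_compat_l; [lra|].
    unfold dq. rewrite <- sum_range_scal_l, <- sum_range_scal_r. apply sum_range_le. intros c Hc.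
    replace (q t i * (A i c * q t c)) with (A i c * (q t c * q t i)) by ring.
    eapply Rle_trans; [apply Rle_abs|]. rewrite Rabs_mult.
    apply Rmult_le_compat_l; [apply Rabs_pos|].
    pose proof (Hterm t c ltac:(lia)). pose proof (Hterm t i ltac:(lia)).
    rewrite Rabs_mult. unfold Rabs; destruct (Rcase_abs (q t c)), (Rcase_abs (q t i)); nra. }
  set (G := fun s => E s * exp (-(2 * M) * s)).
  set (dG := fun t => dE t * exp (-(2 * M) * t) + E t * (-(2 * M) * exp (-(2 * M) * t))).
  assert (HG : forall t, 0 <= t -> deriv_nonneg G t (dG t)).
  { intros t Ht. apply (deriv_nonneg_mult E (fun s => exp (-(2 * M) * s))); auto.
    apply deriv_nonneg_exp; auto. }
  assert (HdG : forall t, 0 <= t -> dG t <= 0).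
  { intros t Ht. unfold dG. pose proof (exp_pos (-(2 * M) * t)). specialize (Hbound t). nra. }
  assert (HE0 : E 0 = 0).
  { unfold E. transitivity (sum_range 0 N (fun _ => 0)); [|apply sum_range_zero].
    apply sum_range_ext. intros k Hk.
    rewrite (Hq0 k) by lia. ring. }
  intros t Ht i Hi.
  pose proof (deriv_nonneg_nonpos_le G dG HG HdG t Ht) as HGt. unfold G in HGt.
  rewrite HE0 in HGt. pose proof (exp_pos (-(2 * M) * t)).
  pose proof (Hterm t i Hi). assert (E t <= 0) by nra. nra.
Qed.

(** * The matrix [A^*] *)

Lemma Astar_row0_apply N alpha b (p : nat -> R) : (1 <= N)%nat ->
  sum_range 0 N (fun c => Astar N alpha b 0 c * p c) = - alpha_sum N alpha * p 0%nat + b 1%nat * p 1%nat.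
Proof.
  intros HN.
  rewrite (sum_range_ext _ _ _ (fun c => (if Nat.eqb c 0 then - alpha_sum N alpha * p c else 0)
                                        + (if Nat.eqb c 1 then b 1%nat * p c else 0))).
  - rewrite sum_range_plus, !sum_range_indicator by lia. reflexivity.
  - intros c _. unfold Astar. destruct c as [|[|c]]; simpl; ring.
Qed.

Lemma Astar_row_apply N alpha b (p : nat -> R) j : (1 <= j <= N)%nat ->
  sum_range 0 N (fun c => Astar N alpha b j c * p c) =
  alpha j * p 0%nat - b j * p j + (if Nat.ltb j N then b (S j) * p (S j) else 0).
Proof.
  intros Hj.
  rewrite (sum_range_ext _ _ _ (fun c => (if Nat.eqb c 0 then alpha j * p c else 0)
      + (if Nat.eqb c j then - b j * p c else 0)
      + (if Nat.eqb c (S j) then (if Nat.ltb j N then b (S j) * p c else 0) else 0))).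
  - rewrite !sum_range_plus, !sum_range_indicator by lia.
    destruct (Nat.ltb_spec j N) as [HjN|HjN].
    + rewrite sum_range_indicator by lia. ring.
    + rewrite (sum_range_ext _ _ _ (fun _ => 0)), sum_range_zero by (intros c _; now destruct (c =? S j)).
      ring.
  - intros c _. unfold Astar.
    rewrite (proj2 (Nat.eqb_neq j 0)), (proj2 (Nat.leb_le j N)) by lia.
    destruct (Nat.eqb_spec c 0), (Nat.eqb_spec c j), (Nat.eqb_spec c (S j)), (Nat.ltb_spec j N);
      simpl; try lia; ring.
Qed.

Lemma Agen_markov_generator N alpha b : (1 <= N)%nat ->
  (forall j, (1 <= j <= N)%nat -> 0 <= alpha j) ->
  (forall j, (1 <= j <= N)%nat -> 0 < b j) ->
  markov_generator N (Agen N alpha b).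
Proof.
  intros HN Halpha Hb. unfold Agen. split.
  - intros i j Hi Hj Hij. unfold Astar.
    destruct (Nat.eqb_spec j 0), (Nat.eqb_spec i 0), (Nat.eqb_spec i 1), (Nat.leb_spec j N),
      (Nat.eqb_spec i j), (Nat.eqb_spec i (S j)), (Nat.ltb_spec j N); simpl; subst;
      try lia; try lra; try (apply Halpha; lia); apply Rlt_le, Hb; lia.
  - intros i Hi. destruct i as [|i].
    + rewrite sum_range_first by lia. change (Astar N alpha b 0 0) with (- alpha_sum N alpha).
      unfold alpha_sum. rewrite (sum_range_ext 1 N (fun j => Astar N alpha b j 0) alpha); [ring|].
      intros j Hj. unfold Astar. destruct j as [|j]; [lia|].
      rewrite (proj2 (Nat.leb_le (S j) N)) by lia. reflexivity.
    + rewrite (sum_range_ext _ _ _ (fun c => (if Nat.eqb c (S i) then - b (S i) else 0)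
                                          + (if Nat.eqb c i then b (S i) else 0))).
      * rewrite sum_range_plus, !(sum_range_indicator 0 N _ (fun _ => _)) by lia. ring.
      * intros c Hc. unfold Astar. destruct c as [|c]; [destruct i; simpl; ring|].
        rewrite (proj2 (Nat.leb_le (S c) N)) by lia.
        destruct (Nat.eqb_spec (S c) 0), (Nat.eqb_spec (S i) 0), (Nat.eqb_spec (S i) (S c)),
          (Nat.eqb_spec (S i) (S (S c))), (Nat.ltb_spec (S c) N), (Nat.eqb_spec (S c) (S i)),
          (Nat.eqb_spec (S c) i); simpl; try lia;
          repeat match goal with H : S _ = S _ |- _ => apply Nat.succ_inj in H end; subst; ring.
Qed.

(** * The explicit solution *)

Definition u_ext (u : R -> R) (x : R) : R := u (Rmax 0 x).

Lemma u_ext_continuous u : (forall t, 0 <= t -> exists l, deriv_nonneg u t l) ->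
  forall x, continuity_pt (u_ext u) x.
Proof.
  intros Hu x. assert (Hx : 0 <= Rmax 0 x) by apply Rmax_l.
  destruct (Hu _ Hx) as [l Hl].
  apply (continuity_pt_ext (comp (extend_left u l) (Rmax 0))).
  - intros z. unfold comp, u_ext. apply extend_left_eq, Rmax_l.
  - apply continuity_pt_comp.
    + apply continuity_pt_locally. intros eps. exists eps. intros z Hz.
      apply Rle_lt_trans with (Rabs (z - x)); [|exact Hz]. unfold Rmax.
      destruct (Rle_dec 0 z), (Rle_dec 0 x); unfold Rabs; repeat destruct Rcase_abs; lra.
    + apply derivable_continuous_pt. exists l. apply derivable_pt_lim_extend_left; auto.
Qed.

Lemma RInt_sum_range m n (f : nat -> R -> R) a c :
  (forall k, (m <= k <= n)%nat -> ex_RInt (f k) a c) ->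
  ex_RInt (fun s => sum_range m n (fun k => f k s)) a c /\
  RInt (fun s => sum_range m n (fun k => f k s)) a c = sum_range m n (fun k => RInt (f k) a c).
Proof.
  intros H. unfold sum_range.
  assert (Hl : forall k, In k (seq m (S n - m)) -> ex_RInt (f k) a c)
    by (intros k Hk; apply H, in_range, Hk).
  revert Hl. generalize (seq m (S n - m)).
  induction l as [|x l IH]; simpl; intros Hl.
  - split; [apply ex_RInt_const|]. rewrite RInt_const. apply Rmult_0_r.
  - destruct IH as [IHex IHeq]; [auto|].
    split; [apply (ex_RInt_plus (f x)); auto|].
    rewrite <- IHeq. apply (RInt_plus (f x)); auto.
Qed.

Section Solution.

Variable N : nat.
Variables alpha b : nat -> R.
Variable u : R -> R.
Hypothesis b_inj : forall i j, (1 <= i <= N)%nat -> (1 <= j <= N)%nat -> i <> j -> b i <> b j.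
Hypothesis u_deriv : forall t, 0 <= t -> exists l, deriv_nonneg u t l.

Let integrand i s := exp (b i * s) * u_ext u s.

Let integrand_continuous i x : continuity_pt (integrand i) x.
Proof.
  apply (continuity_pt_mult (fun s => exp (b i * s)) (u_ext u)).
  - apply derivable_continuous_pt. exists (b i * exp (b i * x)).
    apply is_derive_Reals. auto_derive; auto. ring.
  - apply u_ext_continuous; auto.
Qed.

Let integrand_ex_RInt i a c : ex_RInt (integrand i) a c.
Proof.
  apply (ex_RInt_continuous (V := R_CompleteNormedModule)). intros z _.
  apply continuity_pt_filterlim, integrand_continuous.
Qed.

(* [exp_conv i t = int_0^t e^(-b_i (t - s)) u(s) ds]; [u] is read through [u_ext] so that
   the integrand is continuous on all of [R]. *)
Definition exp_conv i t : R := exp (- b i * t) * RInt (integrand i) 0 t.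

Lemma exp_conv_deriv i t : 0 <= t ->
  deriv_nonneg (exp_conv i) t (- b i * exp_conv i t + u t).
Proof.
  intros Ht.
  assert (Hint : deriv_nonneg (fun t => RInt (integrand i) 0 t) t (integrand i t)).
  { apply (deriv_nonneg_of_derivable_pt_lim (fun t => RInt (integrand i) 0 t)); auto.
    apply is_derive_Reals.
    apply (is_derive_RInt (V := R_CompleteNormedModule) _ (fun t => RInt (integrand i) 0 t) 0 t).
    - apply filter_forall. intros y.
      apply (RInt_correct (V := R_CompleteNormedModule)), integrand_ex_RInt.
    - apply continuity_pt_filterlim, integrand_continuous. }
  eapply deriv_nonneg_eq.
  { apply (deriv_nonneg_mult (fun s => exp (- b i * s))); [exact Ht|apply deriv_nonneg_exp, Ht|exact Hint]. }
  unfold exp_conv, integrand, u_ext. rewrite Rmax_right by lra.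
  replace (exp (- b i * t) * (exp (b i * t) * u t)) with (exp (- b i * t + b i * t) * u t)
    by (rewrite exp_plus; ring).
  replace (- b i * t + b i * t) with 0 by ring. rewrite exp_0. ring.
Qed.

(* [conv_K j m t = int_0^t K_(j,m)(t - s) u(s) ds]. *)
Definition conv_K j m t : R := sum_range j m (fun i => b i * psi_from b j m i * exp_conv i t).

(* The boundary term [K_(j,m)(0) u(t)] of the derivative vanishes by [sum_b_psi_from_eq0]. *)
Lemma conv_K_deriv j m t : (1 <= j)%nat -> (j < m <= N)%nat -> 0 <= t ->
  deriv_nonneg (conv_K j m) t (- b j * conv_K j m t + b j * conv_K (S j) m t).
Proof.
  intros Hj Hjm Ht.
  eapply deriv_nonneg_eq.
  { apply (deriv_nonneg_sum j m (fun i s => b i * psi_from b j m i * exp_conv i s)); auto.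
    intros k Hk. apply deriv_nonneg_scal, exp_conv_deriv; auto. }
  transitivity (sum_range j m (fun i => b i * psi_from b j m i * (- b i * exp_conv i t))
                + sum_range j m (fun i => b i * psi_from b j m i) * u t).
  { rewrite <- sum_range_scal_r, <- sum_range_plus. apply sum_range_ext. intros; ring. }
  rewrite (sum_b_psi_from_eq0 N b b_inj j m) by lia. rewrite Rmult_0_l, Rplus_0_r.
  unfold conv_K. rewrite !(sum_range_first j m) by lia.
  assert (Htail : forall i, (S j <= i <= m)%nat ->
    b i * psi_from b j m i * (- b i * exp_conv i t) =
    - b j * (b i * psi_from b j m i * exp_conv i t) + b j * (b i * psi_from b (S j) m i * exp_conv i t)).
  { intros i Hi. pose proof (psi_from_first N b b_inj j m i ltac:(lia) ltac:(lia) ltac:(lia)) as Hpsi.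
    replace (b j * (b i * psi_from b (S j) m i * exp_conv i t))
      with (b i * exp_conv i t * ((b j - b i) * psi_from b j m i)) by (rewrite Hpsi; ring).
    ring. }
  rewrite (sum_range_ext _ _ _ _ Htail), sum_range_plus, !sum_range_scal_l. ring.
Qed.

Lemma conv_K_self j t : conv_K j j t = b j * exp_conv j t.
Proof. unfold conv_K. rewrite sum_range_single, psi_from_self. ring. Qed.

(* [memory j t = b_j p_j(t)]. *)
Definition memory j t : R := sum_range j N (fun m => alpha m * conv_K j m t).

Lemma memory_deriv j t : (1 <= j <= N)%nat -> 0 <= t ->
  deriv_nonneg (memory j) t (b j * (alpha j * u t - memory j t + memory (S j) t)).
Proof.
  intros Hj Ht.
  apply (deriv_nonneg_ext
    (fun s => alpha j * (b j * exp_conv j s) + sum_range (S j) N (fun m => alpha m * conv_K j m s))).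
  { intros s. unfold memory. rewrite (sum_range_first j N), conv_K_self by lia. reflexivity. }
  eapply deriv_nonneg_eq.
  { apply deriv_nonneg_plus; auto.
    - apply deriv_nonneg_scal, deriv_nonneg_scal, exp_conv_deriv; auto.
    - apply (deriv_nonneg_sum (S j) N (fun m s => alpha m * conv_K j m s)); auto. intros m Hm.
      apply deriv_nonneg_scal, conv_K_deriv; auto; lia. }
  unfold memory. rewrite (sum_range_first j N), conv_K_self by lia.
  rewrite (sum_range_ext (S j) N _ (fun m => - b j * (alpha m * conv_K j m t)
                                       + b j * (alpha m * conv_K (S j) m t))) by (intros; ring).
  rewrite sum_range_plus, !sum_range_scal_l. ring.
Qed.

Let kernel_term j m i t s := b i * psi_from b j m i * exp (- b i * t) * integrand i s.

Let conv_K_as_RInt j m t :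
  ex_RInt (fun s => sum_range j m (fun i => kernel_term j m i t s)) 0 t /\
  RInt (fun s => sum_range j m (fun i => kernel_term j m i t s)) 0 t = conv_K j m t.
Proof.
  destruct (RInt_sum_range j m (fun i s => kernel_term j m i t s) 0 t) as [Hex Heq].
  { intros i _. apply (ex_RInt_scal (V := R_CompleteNormedModule)), integrand_ex_RInt. }
  split; [exact Hex|]. rewrite Heq. unfold conv_K, exp_conv. apply sum_range_ext. intros i _.
  unfold kernel_term. rewrite (RInt_scal (V := R_CompleteNormedModule)) by apply integrand_ex_RInt.
  change scal with Rmult. ring.
Qed.

Lemma memory_one_eq_RiemannInt t
  (pr : Riemann_integrable (fun s => Kfun N alpha b (t - s) * u s) 0 t) :
  0 <= t -> RiemannInt pr = memory 1 t.
Proof.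
  intros Ht. rewrite <- RInt_Reals.
  rewrite (RInt_ext _ (fun s => sum_range 1 N (fun m => alpha m *
             sum_range 1 m (fun i => kernel_term 1 m i t s)))).
  - rewrite (proj2 (RInt_sum_range 1 N (fun m s => alpha m * sum_range 1 m (fun i => kernel_term 1 m i t s)) 0 t
      (fun m _ => ex_RInt_scal (V := R_CompleteNormedModule) _ _ _ _ (proj1 (conv_K_as_RInt 1 m t))))).
    unfold memory. apply sum_range_ext. intros m _.
    rewrite (RInt_scal (V := R_CompleteNormedModule)) by apply conv_K_as_RInt.
    rewrite (proj2 (conv_K_as_RInt 1 m t)). reflexivity.
  - intros s Hs. rewrite Rmin_left, Rmax_right in Hs by lra.
    unfold Kfun. rewrite <- sum_range_scal_r. apply sum_range_ext. intros m _.
    unfold Kj. rewrite Rmult_assoc, <- sum_range_scal_r. f_equal. apply sum_range_ext. intros i _.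
    unfold kernel_term, integrand, u_ext, psi, psi_from. rewrite Rmax_right by lra.
    replace (- b i * (t - s)) with (- b i * t + b i * s) by ring. rewrite exp_plus. ring.
Qed.

Lemma memory_at_0 j : memory j 0 = 0.
Proof.
  unfold memory. transitivity (sum_range j N (fun _ => 0)); [|apply sum_range_zero].
  apply sum_range_ext. intros m _. unfold conv_K.
  rewrite (sum_range_ext j m _ (fun _ => 0)), sum_range_zero; [ring|].
  intros i _. unfold exp_conv. rewrite RInt_point. change (zero : R) with 0. ring.
Qed.

Lemma memory_beyond j t : (N < j)%nat -> memory j t = 0.
Proof. intros Hj. apply sum_range_empty, Hj. Qed.

Definition p_sol t i : R := if Nat.eqb i 0 then u t else / b i * memory i t.

Lemma p_sol_is_solution u0 :
  (1 <= N)%nat ->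
  (forall j, (1 <= j <= N)%nat -> 0 < b j) ->
  u 0 = u0 ->
  (forall t, 0 <= t ->
     exists pr : Riemann_integrable (fun s => Kfun N alpha b (t - s) * u s) 0 t,
       deriv_nonneg u t (- alpha_sum N alpha * u t + RiemannInt pr)) ->
  is_solution N alpha b u0 p_sol.
Proof.
  intros HN Hb Hu0 Hu. split.
  - intros [|i] _; unfold p_sol, p_init; simpl; [exact Hu0|]. rewrite memory_at_0. ring.
  - intros t Ht [|j] Hj.
    + destruct (Hu t Ht) as [pr Hpr]. rewrite Astar_row0_apply by lia.
      unfold p_sol; simpl. rewrite (memory_one_eq_RiemannInt t pr Ht) in Hpr.
      replace (b 1%nat * (/ b 1%nat * memory 1 t)) with (memory 1 t); [exact Hpr|].
      field. apply Rgt_not_eq, Hb; lia.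
    + rewrite Astar_row_apply by lia. unfold p_sol; simpl.
      eapply deriv_nonneg_eq.
      { apply deriv_nonneg_scal, memory_deriv; auto; lia. }
      assert (b (S j) <> 0) by (apply Rgt_not_eq, Hb; lia).
      destruct (Nat.ltb_spec (S j) N).
      * simpl. field. split; [apply Rgt_not_eq, Hb; lia|auto].
      * rewrite (memory_beyond (S (S j))) by lia. field. auto.
Qed.
End Solution.

Lemma is_solution_unique N alpha b u0 p q :
  is_solution N alpha b u0 p -> is_solution N alpha b u0 q ->
  forall t, 0 <= t -> forall i, (i <= N)%nat -> p t i = q t i.
Proof.
  intros [Hp0 Hp] [Hq0 Hq] t Ht i Hi. apply Rminus_diag_uniq.
  apply (linear_ode_zero_solution N (Astar N alpha b) (fun s i => p s i - q s i)); auto.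
  - intros k Hk. rewrite Hp0, Hq0 by exact Hk. ring.
  - intros s Hs k Hk.
    rewrite sum_range_ext with (g := fun c => Astar N alpha b k c * p s c - Astar N alpha b k c * q s c)
      by (intros; ring).
    rewrite sum_range_minus. apply deriv_nonneg_minus; auto.
Qed.

Theorem theorem3p3 (N : nat) (alpha b : nat -> R) (u0 : R) (u : R -> R) :
  (1 <= N)%nat ->
  (forall j, (1 <= j <= N)%nat -> 0 <= alpha j) ->
  (forall j, (1 <= j <= N)%nat -> 0 < b j) ->
  (forall i j, (1 <= i <= N)%nat -> (1 <= j <= N)%nat -> i <> j -> b i <> b j) ->
  u 0 = u0 ->
  (forall t, 0 <= t ->
     exists pr : Riemann_integrable (fun s => Kfun N alpha b (t - s) * u s) 0 t,
       deriv_nonneg u t (- alpha_sum N alpha * u t + RiemannInt pr)) ->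
  markov_generator N (Agen N alpha b) /\
  (exists p : R -> nat -> R, is_solution N alpha b u0 p) /\
  (forall p : R -> nat -> R, is_solution N alpha b u0 p ->
     forall t, 0 <= t -> p t 0%nat = u t).
Proof.
  intros HN Halpha Hb Hinj Hu0 Hu.
  assert (Hu_deriv : forall t, 0 <= t -> exists l, deriv_nonneg u t l)
    by (intros t Ht; destruct (Hu t Ht) as [pr Hpr]; eauto).
  pose proof (p_sol_is_solution N alpha b u Hinj Hu_deriv u0 HN Hb Hu0 Hu) as Hsol.
  split; [apply Agen_markov_generator; auto|]. split; [eauto|].
  intros p Hp t Ht.
  rewrite (is_solution_unique N alpha b u0 p (p_sol N alpha b u) Hp Hsol t Ht 0) by lia.
  reflexivity.
Qed.
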